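(* Let $q>4$. For any distinct $x,y,z\in\mathbb{Z}_q$ there exists an $\mathcal{OS}_q(2)$ of period $q(q-1)/2$ if $q$ is odd, or $q(q-2)/2$ if $q$ is even, whose ring sequence has the form $[x,y,z,x,\ldots]$ (i.e. its first four terms are $x,y,z,x$). Moreover, if $x,y,z\neq 0$, then there exists an $\mathcal{OS}_q(2)$ of the same period whose ring sequence has the form $[0,x,y,z,x,\ldots]$.
   Context: For a periodic sequence $S=(s_i)$ over $\mathbb{Z}_q$ write $\mathbf{s}_n(i)=(s_i,\ldots,s_{i+n-1})$ and let $\mathbf{u}^R$ denote the reverse of a tuple. An $\mathcal{OS}_q(n)$ (orientable sequence) is a periodic sequence of period $m$ over $\mathbb{Z}_q$ such that $\mathbf{s}_n(i)=\mathbf{s}_n(j)$ implies $i\equiv j\pmod m$, and $\mathbf{s}_n(i)\neq\mathbf{s}_n(j)^R$ for all $i,j$. The ring sequence of a sequence of period $m$ is one period $[s_0,\ldots,s_{m-1}]$, listed from some starting position. *)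

From mathcomp Require Import all_boot.
Set Implicit Arguments. Unset Strict Implicit. Unset Printing Implicit Defensive.

(* A periodic sequence S over Z_q (= 'I_q) of period m is represented by its
   ring sequence s : seq 'I_q of size m (one period, listed from some starting
   position); the term s_i (i any natural number) is nth _ s (i mod m).
   window n s i is the n-tuple s_n(i) = (s_i, ..., s_{i+n-1}). *)
Definition window (q n : nat) (s : seq 'I_q) (i : nat) : seq 'I_q :=
  match s with
  | [::] => [::]
  | x0 :: _ => [seq nth x0 s ((i + k) %% size s) | k <- iota 0 n]
  end.

Definition orientable (q n : nat) (s : seq 'I_q) : Prop :=
  0 < size s /\
  (forall i j : nat, window n s i = window n s j -> i = j %[mod size s]) /\
  (forall i j : nat, window n s i <> rev (window n s j)).

From mathcomp Require Import all_boot zify.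
Set Implicit Arguments. Unset Strict Implicit. Unset Printing Implicit Defensive.

(* The windows s_2(i) of a ring sequence are the directed edges of the closed walk it
   describes in the complete graph on Z_q, and a reversed window is the same edge walked
   backwards.  So an OS_q(2) is a closed walk that never stays put and never uses an
   (undirected) edge twice.  Such walks on the vertices 0, ..., n-1 are built by induction
   n -> n+2: the closed walk n, 0, n+1, 1, n, 2, n+1, 3, ... (followed by the triangle
   n, n-1, n+1 when n is odd) uses only edges at the two new vertices, and is spliced into
   the old walk at a visit of 0.  Its length 2n (resp. 2n+1) is exactly the growth of the
   period.  Starting from explicit walks for n = 5, 6 that begin 0, 1, 2, 3, 1 and visit 0
   again later, this shape is preserved; relabelling 0, 1, 2, 3 as w, x, y, z, with w = 0
   or with w outside {x, y, z} followed by a rotation, gives the two ring sequences. *)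

Section ZipRot.
Variables S T : Type.

Lemma take_zip k (s : seq S) (t : seq T) : take k (zip s t) = zip (take k s) (take k t).
Proof. by elim: s t k => [|x s IH] [|y t] [|k] //=; rewrite IH. Qed.

Lemma drop_zip k (s : seq S) (t : seq T) : drop k (zip s t) = zip (drop k s) (drop k t).
Proof. by elim: s t k => [|x s IH] [|y t] [|k] //=; rewrite ?IH //; case: drop. Qed.

Lemma rot_zip k (s : seq S) (t : seq T) :
  size s = size t -> rot k (zip s t) = zip (rot k s) (rot k t).
Proof. by move=> st; rewrite /rot drop_zip take_zip zip_cat // !size_drop st. Qed.

End ZipRot.

Section CycleEdges.
Variable T : eqType.
Implicit Types (s A B C : seq T) (w : T).

Definition cycle_edges s : seq (T * T) := zip s (rot 1 s).

Lemma size_cycle_edges s : size (cycle_edges s) = size s.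
Proof. by rewrite /cycle_edges size1_zip // size_rot. Qed.

Lemma cycle_edges_rot k s : cycle_edges (rot k s) = rot k (cycle_edges s).
Proof. by rewrite /cycle_edges rot_zip ?size_rot // rot_rot. Qed.

Lemma perm_cycle_edges_rot k s : perm_eql (cycle_edges (rot k s)) (cycle_edges s).
Proof. by rewrite cycle_edges_rot; apply: perm_rot. Qed.

Lemma mem_cycle_edges s e : e \in cycle_edges s -> (e.1 \in s) && (e.2 \in s).
Proof.
move=> es; have size_rot1 : size (rot 1 s) = size s by rewrite size_rot.
have := map_f (@snd T T) es; rewrite -/(unzip2 _) unzip2_zip ?size_rot1 // mem_rot.
by have := map_f (@fst T T) es; rewrite -/(unzip1 _) unzip1_zip ?size_rot1 // => -> ->.
Qed.

Lemma nth_cycle_edges x0 s i : 0 < size s ->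
  nth (x0, x0) (cycle_edges s) (i %% size s) =
  (nth x0 s (i %% size s), nth x0 s (i.+1 %% size s)).
Proof.
case: s => [|a l] // _; rewrite nth_zip ?size_rot // rot1_cons nth_rcons /=.
set k := i %% _; have lt_k : k < (size l).+1 by rewrite ltn_mod.
have -> : i.+1 %% (size l).+1 = k.+1 %% (size l).+1 by rewrite -addn1 -modnDml addn1.
case: ltngtP => [lt_kl | gt_kl | ->]; last by rewrite modnn.
  by rewrite modn_small.
by move: lt_k; rewrite ltnS leqNgt gt_kl.
Qed.

Lemma cycle_edges_cat w C B :
  cycle_edges (w :: C ++ w :: B) = cycle_edges (w :: C) ++ cycle_edges (w :: B).
Proof.
by rewrite /cycle_edges !rot1_cons -!cats1 -zip_cat ?size_cat ?addn1 //= -!catA.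
Qed.

Lemma cycle_edges_flatten w (Cs : seq (seq T)) :
  cycle_edges (flatten [seq w :: C | C <- Cs]) =
  flatten [seq cycle_edges (w :: C) | C <- Cs].
Proof.
elim: Cs => [|C [|C' Cs] IH] //=; first by rewrite !cats0.
by rewrite cycle_edges_cat IH.
Qed.

Lemma perm_cycle_edges_splice A w C B :
  perm_eq (cycle_edges (A ++ w :: C ++ w :: B))
          (cycle_edges (A ++ w :: B) ++ cycle_edges (w :: C)).
Proof.
rewrite -(perm_cycle_edges_rot (size A)) rot_size_cat cat_cons -catA.
rewrite cycle_edges_cat perm_catC perm_cat2r.
by rewrite -[w :: B ++ A]/((w :: B) ++ A) -rot_size_cat perm_cycle_edges_rot.
Qed.

End CycleEdges.

Definition uedge (e : nat * nat) := (minn e.1 e.2, maxn e.1 e.2).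

Definition simple_edges (E : seq (nat * nat)) :=
  all (fun e => e.1 != e.2) E && uniq (map uedge E).

Lemma simple_edges_perm E1 E2 : perm_eq E1 E2 -> simple_edges E1 = simple_edges E2.
Proof. by move=> pE; rewrite /simple_edges (perm_all _ pE) (perm_uniq (perm_map _ pE)). Qed.

Lemma simple_edges_rot k E : simple_edges (rot k E) = simple_edges E.
Proof. by apply: simple_edges_perm; rewrite perm_rot. Qed.

Lemma simple_edges_cat E1 E2 :
  simple_edges E1 -> simple_edges E2 ->
  {in E1 & E2, forall e1 e2, uedge e1 != uedge e2} -> simple_edges (E1 ++ E2).
Proof.
move=> /andP[loop1 uniq1] /andP[loop2 uniq2] disj.
rewrite /simple_edges all_cat loop1 loop2 map_cat cat_uniq uniq1 uniq2 /= andbT.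
apply/hasPn => _ /mapP[e2 E2e2 ->]; apply/mapP => -[e1 E1e1 /eqP].
by rewrite eq_sym (negPf (disj _ _ E1e1 E2e2)).
Qed.

Definition cross_loops n : seq (seq nat) :=
  [seq [:: j.*2; n.+1; j.*2.+1] | j <- iota 0 n./2] ++
  (if odd n then [:: [:: n.-1; n.+1]] else [::]).

Definition cross_walk n : seq nat := flatten [seq n :: c | c <- cross_loops n].

Lemma simple_cross_walk n : simple_edges (cycle_edges (cross_walk n)).
Proof.
rewrite cycle_edges_flatten /cross_loops map_cat flatten_cat -map_comp.
pose squares k := flatten [seq cycle_edges [:: n; j.*2; n.+1; j.*2.+1] | j <- iota 0 k].
have squares_simple k : k.*2 <= n ->
    simple_edges (squares k) /\ {in squares k, forall e, (uedge e).1 < k.*2}.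
  elim: k => [|k IH] lekn //.
  have [simple_k small_k] : simple_edges (squares k) /\ _ := IH ltac:(lia).
  rewrite /squares -[k.+1]addn1 iotaD map_cat flatten_cat /= -/(squares k).
  split.
    apply: simple_edges_cat => // [|e1 e2 /small_k small_e1 new_e2].
      rewrite /simple_edges /uedge /= !inE !xpair_eqE; lia.
    apply: contraTneq small_e1 => ->; move: new_e2; rewrite !inE.
    by case/or4P => /eqP-> ; rewrite /uedge /=; lia.
  move=> e; rewrite mem_cat => /orP[/small_k /= | ]; first lia.
  by rewrite !inE; case/or4P => /eqP-> ; rewrite /uedge /=; lia.
have n_eq := odd_double_half n.
have [simple_sq small_sq] := squares_simple n./2 ltac:(lia).
rewrite -/(squares n./2); case: ifP => odd_n /=; last by rewrite cats0.
apply: simple_edges_cat; rewrite ?cats0 //.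
  rewrite /simple_edges /uedge /= !inE !xpair_eqE; lia.
move=> e1 e2 /small_sq small_e1 tri_e2; apply: contraTneq small_e1 => ->; move: tri_e2; rewrite !inE.
by case/or3P => /eqP-> ; rewrite /uedge /=; lia.
Qed.

Lemma cross_walk_edge_large n : {in cycle_edges (cross_walk n), forall e, n <= (uedge e).2}.
Proof.
move=> e; rewrite cycle_edges_flatten => /flatten_mapP[c]; rewrite mem_cat.
case/orP => [/mapP[j _ ->] | ]; first by rewrite /= !inE; case/or4P => /eqP-> /=; lia.
by case: ifP => // _; rewrite inE => /eqP-> /=; rewrite !inE; case/or3P => /eqP-> /=; lia.
Qed.

Lemma cross_walk_lt n : all (gtn n.+2) (cross_walk n).
Proof.
apply/allP => v /flatten_mapP[c]; rewrite mem_cat => /orP[/mapP[j] | ].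
  by rewrite mem_iota => lt_j -> /=; rewrite !inE; have := odd_double_half n; lia.
by case: ifP => // _; rewrite inE => /eqP-> /=; rewrite !inE; lia.
Qed.

Lemma size_cross_walk n : size (cross_walk n) = 4 * n./2 + 3 * odd n.
Proof.
rewrite /cross_walk /cross_loops map_cat flatten_cat size_cat.
congr (_ + _); last by case: odd.
by elim: n./2 => // k IH; rewrite -[k.+1]addn1 iotaD !map_cat flatten_cat size_cat IH /=; lia.
Qed.

Lemma rot1_cross_walk n : 1 < n -> exists C, rot 1 (cross_walk n) = 0 :: C.
Proof.
move=> lt1n; have : 0 < n./2 by have := odd_double_half n; lia.
by rewrite /cross_walk /cross_loops; case: n./2 => //= k _; rewrite rot1_cons; eexists.
Qed.

Definition os_period q := (if odd q then q * (q - 1) else q * (q - 2)) %/ 2.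

Lemma os_period_add2 n : os_period n + size (cross_walk n) = os_period n.+2.
Proof.
rewrite size_cross_walk /os_period /=; have := odd_double_half n.
by case: (odd n) => /= n_eq; rewrite -n_eq ?negbK /=; nia.
Qed.

(* The later visit of 0 is where the next cross walk gets spliced in. *)
Definition os2_cycle n (s : seq nat) : Prop :=
  [/\ exists A B, s = [:: 0; 1; 2; 3; 1] ++ A ++ 0 :: B,
      all (gtn n) s, size s = os_period n & simple_edges (cycle_edges s)].

Lemma os2_cycle_add2 n s : 1 < n -> os2_cycle n s -> exists s', os2_cycle n.+2 s'.
Proof.
move=> lt1n [[A [B ->]]]; rewrite catA; set P := _ ++ A => lt_s size_s simple_s.
have [C rotW] := rot1_cross_walk lt1n.
have lt_C : all (gtn n.+2) C.
  by apply/allP => v C_v; apply: (allP (cross_walk_lt n)); rewrite -(mem_rot 1) rotW inE C_v orbT.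
exists (P ++ 0 :: C ++ 0 :: B); split.
- by exists (A ++ 0 :: C), B; rewrite /P -!catA.
- have : all (gtn n.+2) (P ++ 0 :: B) by apply: sub_all lt_s => v /=; lia.
  by rewrite !all_cat /= all_cat lt_C /= => /andP[-> ->].
- have size_C : size (0 :: C) = size (cross_walk n) by rewrite -rotW size_rot.
  by rewrite -os_period_add2 -size_s -size_C !size_cat /= size_cat /=; lia.
rewrite (simple_edges_perm (perm_cycle_edges_splice _ _ _ _)).
apply: simple_edges_cat => //.
  by rewrite -rotW cycle_edges_rot simple_edges_rot simple_cross_walk.
move=> e1 e2 /mem_cycle_edges/andP[/(allP lt_s) lt_e1 /(allP lt_s) lt_e2].
rewrite -rotW cycle_edges_rot mem_rot => /cross_walk_edge_large.
by apply: contraTneq => <- /=; move: lt_e1 lt_e2 => /=; lia.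
Qed.

Lemma os2_cycle5 : os2_cycle 5 [:: 0; 1; 2; 3; 1; 4; 2; 0; 3; 4].
Proof. by split; first by exists [:: 4; 2], [:: 3; 4]. Qed.

Lemma os2_cycle6 : os2_cycle 6 [:: 0; 1; 2; 3; 1; 5; 0; 2; 4; 3; 5; 4].
Proof. by split; first by exists [:: 5], [:: 2; 4; 3; 5; 4]. Qed.

Lemma os2_cycle_exists q : 4 < q -> exists s, os2_cycle q s.
Proof.
elim/ltn_ind: q => q IH lt4q; have [leq6 | lt6q] := leqP q 6.
  have [->|->] : q = 5 \/ q = 6 by lia.
    by eexists; apply: os2_cycle5.
  by eexists; apply: os2_cycle6.
have [s os2_s] := IH q.-2 ltac:(lia) ltac:(lia).
have -> : q = q.-2.+2 by lia.
by apply: os2_cycle_add2 os2_s; lia.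
Qed.

Lemma window2_map q (f : nat -> 'I_q) x0 s i : 0 < size s ->
  window 2 (map f s) i = [:: f (nth x0 s (i %% size s)); f (nth x0 s (i.+1 %% size s))].
Proof.
case: s => [|a l] // _; rewrite /window /= -[f a :: map f l]/(map f (a :: l)) size_map.
by rewrite addn0 addn1 !(nth_map a) ?ltn_mod // !(set_nth_default x0) ?ltn_mod.
Qed.

Lemma orientable_map q (f : nat -> 'I_q) s :
  0 < size s -> simple_edges (cycle_edges s) -> {in s &, injective f} ->
  orientable 2 (map f s).
Proof.
case: s => [|a l] // _; set s := a :: l; set m := size s.
move=> /andP[/allP loopless uniq_keys] f_inj.
pose e i := nth (a, a) (cycle_edges s) (i %% m).
have e_in i : e i \in cycle_edges s by rewrite mem_nth ?size_cycle_edges ?ltn_mod.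
have window_e i : window 2 (map f s) i = [:: f (e i).1; f (e i).2].
  by rewrite (window2_map _ a) // /e nth_cycle_edges.
have key_inj i j : uedge (e i) = uedge (e j) -> i = j %[mod m].
  move=> eq_keys; apply/eqP.
  rewrite -(nth_uniq (0, 0) _ _ uniq_keys) ?size_map ?size_cycle_edges ?ltn_mod //.
  by rewrite !(nth_map (a, a)) ?size_cycle_edges ?ltn_mod // eq_keys.
have fst_in i : (e i).1 \in s by case/andP: (mem_cycle_edges (e_in i)).
have snd_in i : (e i).2 \in s by case/andP: (mem_cycle_edges (e_in i)).
rewrite /orientable size_map; split=> //; split=> i j; rewrite !window_e.
  case=> /(f_inj _ _ (fst_in i) (fst_in j)) eq1 /(f_inj _ _ (snd_in i) (snd_in j)) eq2.
  by apply: key_inj; rewrite /uedge eq1 eq2.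
rewrite /rev /= => -[/(f_inj _ _ (fst_in i) (snd_in j)) eq1 /(f_inj _ _ (snd_in i) (fst_in j)) eq2].
have /key_inj ij : uedge (e i) = uedge (e j) by rewrite /uedge eq1 eq2 minnC maxnC.
have e_ji : e j = e i by rewrite /e ij.
by have := loopless _ (e_in i); rewrite {1}eq1 e_ji eqxx.
Qed.

Lemma relabel_prefix q (x0 : 'I_q) (T : seq 'I_q) : uniq T ->
  exists f : nat -> 'I_q, {in gtn q &, injective f} /\ map f (iota 0 (size T)) = T.
Proof.
move=> uniq_T; pose order := T ++ [seq v <- enum 'I_q | v \notin T].
have uniq_order : uniq order.
  rewrite cat_uniq uniq_T filter_uniq ?enum_uniq // andbT.
  by apply/hasPn => v; rewrite mem_filter => /andP[].
have size_order : size order = q.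
  rewrite -[RHS](size_enum_ord q); apply/perm_size/uniq_perm; rewrite ?enum_uniq // => v.
  by rewrite mem_cat mem_filter mem_enum andbT orbN.
exists (nth x0 order); split; last by rewrite map_nth_iota0 ?take_size_cat // size_cat leq_addr.
move=> i j; rewrite !inE => lt_i lt_j /eqP.
by rewrite nth_uniq ?size_order // => /eqP.
Qed.

Lemma os2_ring_sequence q (w x y z : 'I_q) : 4 < q -> uniq [:: w; x; y; z] ->
  exists rest, let s := [:: w, x, y, z, x & rest] in
    [/\ size s = os_period q, orientable 2 s & orientable 2 (rot 1 s)].
Proof.
move=> lt4q uniq_wxyz.
have [s [[A [B def_s]] lt_s size_s simple_s]] := os2_cycle_exists lt4q.
have [f [f_inj [f0 f1 f2 f3]]] := relabel_prefix w uniq_wxyz.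
have f_inj_s : {in s &, injective f}.
  by move=> u v /(allP lt_s) lt_u /(allP lt_s) lt_v; apply: f_inj.
have s_gt0 : 0 < size s by rewrite def_s.
exists (map f (A ++ 0 :: B)); rewrite /= -f0 -f1 -f2 -f3.
have -> : [:: f 0, f 1, f 2, f 3, f 1 & map f (A ++ 0 :: B)] = map f s by rewrite def_s.
rewrite -map_rot; split; first by rewrite -size_s def_s size_map.
  by apply: orientable_map.
apply: orientable_map; rewrite ?size_rot ?cycle_edges_rot ?simple_edges_rot //.
by move=> u v; rewrite !mem_rot; apply: f_inj_s.
Qed.

Theorem lemma3p21 (q : nat) (hq : 4 < q) (x y z : 'I_q)
  (hxy : x != y) (hxz : x != z) (hyz : y != z) :
  let m := (if odd q then q * (q - 1) else q * (q - 2)) %/ 2 in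
  (exists rest : seq 'I_q,
     let s := [:: x, y, z, x & rest] in size s = m /\ orientable 2 s) /\
  ((x : nat) != 0 -> (y : nat) != 0 -> (z : nat) != 0 ->
   exists (zero : 'I_q) (rest : seq 'I_q), (zero : nat) = 0 /\
     let s := [:: zero, x, y, z, x & rest] in size s = m /\ orientable 2 s).
Proof.
move=> m; split.
  have [w w_new] : exists w : 'I_q, w \notin [:: x; y; z].
    case: (pickP [pred w : 'I_q | w \notin [:: x; y; z]]) => [w w_new | all_old]; first by exists w.
    have : #|'I_q| <= size [:: x; y; z].
      apply: leq_trans (card_size _); apply/subset_leq_card/subsetP => v _.
      by have /= /negbFE := all_old v.
    by rewrite card_ord /=; lia.
  have uniq_wxyz : uniq [:: w; x; y; z] by rewrite /= w_new !inE negb_or hxy hxz hyz.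
  have [rest [size_s _]] := os2_ring_sequence hq uniq_wxyz.
  rewrite rot1_cons /= -cats1 => orientable_s.
  by exists (rest ++ [:: w]); rewrite /= size_cat addn1.
move=> x_nz y_nz z_nz; have q_gt0 : 0 < q by lia.
have uniq_0xyz : uniq [:: Ordinal q_gt0; x; y; z].
  by rewrite /= !inE !negb_or hxy hxz hyz -!val_eqE /= !(eq_sym 0) x_nz y_nz z_nz.
have [rest [size_s orientable_s _]] := os2_ring_sequence hq uniq_0xyz.
by exists (Ordinal q_gt0), rest.
Qed.
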